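(* Let $G$ be the $2\times n$ square lattice graph $P_2\times P_n$ with $n>2$. Then $T_1(G)=3$.
   Context: $P_2\times P_n$ is the Cartesian product of paths on $2$ and $n$ vertices. Fix a set $\Sigma$ of symbols (bond-edge types) and a disjoint copy $\hat\Sigma=\{\hat a:a\in\Sigma\}$ with $\hat{\hat a}=a$; elements of $\Sigma\cup\hat\Sigma$ are cohesive-end types. A tile is a finite multiset of cohesive-end types. A pot is a finite set $P$ of tiles such that whenever $x$ occurs in a tile of $P$, $\hat x$ occurs in some tile of $P$; $\#P$ is its number of tiles. Graphs are finite, loops and multiple edges allowed. An assembly design of a graph $H$ labels the half-edges of $H$ by cohesive-end types so that the two half-edges of each edge receive complementary labels $x,\hat x$; $t_v$ is the multiset of labels at $v$, $P_\lambda(H)=\{t_v\}$, and $P$ realizes $H$ ($H\in\mathcal{O}(P)$) if some assembly design $\lambda$ has $P_\lambda(H)\subseteq P$. $T_1(G)=\min\{\#P: G\in\mathcal{O}(P)\}$. *)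

From HB Require Import structures.
From mathcomp Require Import all_boot.
From mathcomp Require Import finmap multiset.

Set Implicit Arguments.
Unset Strict Implicit.
Unset Printing Implicit Defensive.

Local Open Scope fset_scope.

(* Bond-edge types: Sigma := nat (an unbounded supply of symbols).
   A cohesive-end type is a pair (a, h): h = false means a in Sigma,
   h = true means the hatted copy \hat a. *)
Definition cet := (nat * bool)%type.

Definition compl (x : cet) : cet := (x.1, ~~ x.2).

Definition tile := {mset cet}%mset.

Definition is_pot (P : {fset tile}) : Prop :=
  forall t : tile, t \in P -> forall x : cet, x \in t ->
    exists2 t' : tile, t' \in P & compl x \in t'.

Definition pot_size (P : {fset tile}) : nat := #|` P|.

(* A finite graph with loops and multiple edges allowed: a finite vertex
   type V, a finite edge type E, and for every edge its two endpoints. *)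
Record graph := Graph {
  gV : finType;
  gE : finType;
  gends : gE -> gV * gV
}.

Definition half_end (G : graph) (h : gE G * bool) : gV G :=
  if h.2 then (gends h.1).2 else (gends h.1).1.

Definition assembly_design (G : graph) (lam : gE G -> bool -> cet) : Prop :=
  forall e : gE G, lam e true = compl (lam e false).

Definition tile_at (G : graph) (lam : gE G -> bool -> cet) (v : gV G) : tile :=
  seq_mset [seq lam h.1 h.2 | h <- enum [pred h : gE G * bool | half_end h == v]].

Definition realizes (P : {fset tile}) (G : graph) : Prop :=
  exists lam : gE G -> bool -> cet,
    assembly_design lam /\ forall v : gV G, tile_at lam v \in P.

Definition T1_eq (G : graph) (k : nat) : Prop :=
  (exists2 P : {fset tile}, is_pot P /\ realizes P G & pot_size P = k) /\
  (forall P : {fset tile}, is_pot P -> realizes P G -> k <= pot_size P).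

Definition grid_adj (n : nat) (u v : 'I_2 * 'I_n) : bool :=
  ((u.1 == v.1) && ((u.2.+1 == v.2 :> nat) || (v.2.+1 == u.2 :> nat)))
  || ((u.2 == v.2) && (u.1 != v.1)).

(* Each undirected edge once: store the ordered pair (u,v) with u before v. *)
Definition grid_edge_pred (n : nat) : pred (('I_2 * 'I_n) * ('I_2 * 'I_n)) :=
  fun p => grid_adj p.1 p.2 && (enum_rank p.1 < enum_rank p.2)%N.

Definition grid_edge (n : nat) := {p : ('I_2 * 'I_n) * ('I_2 * 'I_n) | @grid_edge_pred n p}.

Definition ladder (n : nat) : graph :=
  @Graph ('I_2 * 'I_n)%type (grid_edge n : finType) (fun e => val e).

From mathcomp Require Import all_boot zify.
From mathcomp Require Import finmap multiset.

Set Implicit Arguments.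
Unset Strict Implicit.
Unset Printing Implicit Defensive.

(* Every edge contributes one hatted and one unhatted label, so in any assembly
   design the tiles t_v carry, counted over all vertices, as many hatted as
   unhatted labels.  If a pot with at most two tiles realized the ladder, the two
   adjacent corners (degree 2) would share a tile containing some x and \hat x,
   hence balanced; every other vertex would use that tile or the tile of a
   degree-3 vertex, and the global count would force the latter to be balanced
   as well, which is impossible for a multiset of odd size.  Conversely three
   tiles suffice, see [ladder_label]. *)

Definition nhat (t : tile) : nat := count (fun x : cet => x.2) (enum_mset t).
Definition nunhat (t : tile) : nat := count (fun x : cet => ~~ x.2) (enum_mset t).

Lemma nhat_add_nunhat (t : tile) : nhat t + nunhat t = size (enum_mset t).
Proof. exact: count_predC. Qed.

Lemma count_hat_pair_compl (s : seq cet) (x : cet) :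
  size s = 2 -> x \in s -> compl x \in s ->
  count (fun y : cet => y.2) s = count (fun y : cet => ~~ y.2) s.
Proof.
case: s => [|y [|z []]] //= _; rewrite !inE /compl.
by case: x y z => [x1 []] [y1 []] [z1 []]; rewrite !xpair_eqE /= ?andbF ?orbF.
Qed.

Lemma mem_seq_mset (K : choiceType) (s : seq K) (x : K) : (x \in seq_mset s) = (x \in s).
Proof. by rewrite in_mset mset_seqE -has_count has_pred1. Qed.

Definition opp_half (E : Type) (h : E * bool) : E * bool := (h.1, ~~ h.2).

Lemma opp_halfK (E : Type) : involutive (@opp_half E).
Proof. by case=> e b; rewrite /opp_half negbK. Qed.

Definition far_end (G : graph) (h : gE G * bool) : gV G := half_end (opp_half h).

Definition deg (G : graph) (v : gV G) : nat := #|[pred h : gE G * bool | half_end h == v]|.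

Section AssemblyDesign.

Variables (G : graph) (lam : gE G -> bool -> cet).

Lemma mem_tile_at (h : gE G * bool) : lam h.1 h.2 \in tile_at lam (half_end h).
Proof.
by rewrite /tile_at mem_seq_mset; apply/mapP; exists h; rewrite ?mem_enum ?inE.
Qed.

Lemma size_tile_at (v : gV G) : size (enum_mset (tile_at lam v)) = deg v.
Proof. by rewrite /tile_at (perm_size (perm_eq_seq_mset _)) size_map /deg cardE. Qed.

Lemma sum_count_tile_at (q : pred cet) :
  \sum_(v : gV G) count q (enum_mset (tile_at lam v)) = \sum_(h : gE G * bool) q (lam h.1 h.2).
Proof.
rewrite (partition_big (@half_end G) predT) //=; apply: eq_bigr => v _.
rewrite /tile_at (permP (perm_eq_seq_mset _)) count_map -sumn_count sumn_map.
by rewrite big_enum_cond; apply: eq_bigl => h; rewrite inE andbT.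
Qed.

Hypothesis lam_design : assembly_design lam.

Lemma design_opp_half (h : gE G * bool) :
  lam (opp_half h).1 (opp_half h).2 = compl (lam h.1 h.2).
Proof.
case: h => e [] /=; rewrite lam_design //.
by rewrite /compl negbK; case: (lam e false).
Qed.

Lemma sum_nhat_tile_at :
  \sum_(v : gV G) nhat (tile_at lam v) = \sum_(v : gV G) nunhat (tile_at lam v).
Proof.
rewrite !sum_count_tile_at (reindex_inj (can_inj (@opp_halfK _))) /=.
by apply: eq_bigr => h _; rewrite design_opp_half.
Qed.

Lemma nhat_tile_at_edge (h : gE G * bool) :
  tile_at lam (far_end h) = tile_at lam (half_end h) ->
  size (enum_mset (tile_at lam (half_end h))) = 2 ->
  nhat (tile_at lam (half_end h)) = nunhat (tile_at lam (half_end h)).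
Proof.
move=> same_tile size2; apply: (count_hat_pair_compl size2 (mem_tile_at h)).
by rewrite -design_opp_half -same_tile; apply: mem_tile_at.
Qed.

Lemma nhat_eq_nunhat_of_others (t : tile) (v1 : gV G) :
  tile_at lam v1 = t ->
  (forall v, tile_at lam v != t -> nhat (tile_at lam v) = nunhat (tile_at lam v)) ->
  nhat t = nunhat t.
Proof.
move=> tv1 others; have := sum_nhat_tile_at.
rewrite (bigID (fun v => tile_at lam v == t)) [RHS](bigID (fun v => tile_at lam v == t)) /=.
have -> : \sum_(v | tile_at lam v != t) nhat (tile_at lam v) =
          \sum_(v | tile_at lam v != t) nunhat (tile_at lam v).
  by apply: eq_bigr => v /others.
have sum_t f : \sum_(v | tile_at lam v == t) f (tile_at lam v) =
               #|[pred v | tile_at lam v == t]| * f t.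
  by rewrite -sum_nat_const; apply: eq_bigr => v /eqP->.
move=> /addIn; rewrite !sum_t => /eqP; rewrite eqn_pmul2l => [/eqP //|].
by apply/card_gt0P; exists v1; rewrite inE tv1.
Qed.

End AssemblyDesign.

Lemma fset_card_le2 (K : choiceType) (P : {fset K}) (a b c : K) :
  #|` P| <= 2 -> a \in P -> b \in P -> c \in P -> a != b -> (c == a) || (c == b).
Proof.
move=> le2 aP bP cP ab; apply/negPn/negP; rewrite negb_or => /andP[ca cb].
have sub : ([fset a; b; c] `<=` P)%fset.
  by apply/fsubsetP => x; rewrite !inE -orbA => /or3P[] /eqP->.
have := fsubset_leq_card sub; rewrite -fsetUA !cardfsU1 cardfs1 !inE negb_or ab.
by rewrite eq_sym ca eq_sym cb /=; lia.
Qed.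

Lemma realizes_pot_size_gt2 (G : graph) (P : {fset tile}) (h : gE G * bool) (w : gV G) :
  realizes P G -> deg (half_end h) = 2 -> deg (far_end h) = 2 -> odd (deg w) -> 2 < #|` P|.
Proof.
case=> lam [lam_design lam_P] deg_u deg_u' odd_w; rewrite ltnNge; apply/negP => le2.
have size_neq v v' : deg v != deg v' -> tile_at lam v != tile_at lam v'.
  by rewrite -!(size_tile_at lam); apply: contra => /eqP E; rewrite E.
have deg2_w v : deg v = 2 -> tile_at lam v != tile_at lam w.
  by move=> deg_v; apply: size_neq; rewrite deg_v; apply: contraTneq odd_w => <-.
have t_cases v : tile_at lam v != tile_at lam w -> tile_at lam v = tile_at lam (half_end h).
  move=> v_w; have := fset_card_le2 le2 (lam_P _) (lam_P w) (lam_P v) (deg2_w _ deg_u).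
  by rewrite (negbTE v_w) orbF => /eqP.
have bal_u : nhat (tile_at lam (half_end h)) = nunhat (tile_at lam (half_end h)).
  apply: (nhat_tile_at_edge lam_design); last by rewrite size_tile_at.
  exact/t_cases/deg2_w.
have bal_w : nhat (tile_at lam w) = nunhat (tile_at lam w).
  by apply: (nhat_eq_nunhat_of_others lam_design erefl) => v /t_cases->.
by move: odd_w; rewrite -(size_tile_at lam) -nhat_add_nunhat bal_w addnn odd_double.
Qed.

Section RelGraph.

Variables (T : finType) (r : rel T).

(* [ladder n] is convertible to [rel_graph (@grid_adj n)], so the lemmas of this
   section apply to it. *)
Definition rel_edge : pred (T * T) := fun p => r p.1 p.2 && (enum_rank p.1 < enum_rank p.2).

Definition rel_graph : graph := @Graph T {p : T * T | rel_edge p} (fun e => val e).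

Local Notation half := (gE rel_graph * bool)%type.

Lemma far_end_inj (v : T) :
  {in [pred h : half | half_end h == v] &, injective (@far_end rel_graph)}.
Proof.
move=> [[[p1 p2] e_p] b] [[[q1 q2] e_q] b'].
have /andP[_ /= lt_p] := e_p; have /andP[_ /= lt_q] := e_q.
rewrite !inE /far_end /half_end /=.
case: b b' => [] [] /= /eqP E1 /eqP E2 E3; subst.
- by congr (_, _); apply: val_inj.
- lia.
- lia.
- by congr (_, _); apply: val_inj.
Qed.

Hypotheses (r_sym : symmetric r) (r_irr : irreflexive r).

Lemma rel_graph_adj (h : half) : r (half_end h) (far_end h).
Proof.
case: h => [[[p1 p2] e_p] b]; have /andP[/= r_p _] := e_p.
by case: b; rewrite /far_end /half_end //= r_sym.
Qed.

Lemma rel_graph_half (u w : T) : r u w -> exists2 h : half, half_end h = u & far_end h = w.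
Proof.
move=> r_uw; case: (ltngtP (enum_rank u) (enum_rank w)) => [lt_uw|lt_wu|eq_uw].
- have e_uw : rel_edge (u, w) by rewrite /rel_edge /= r_uw lt_uw.
  by exists (exist _ (u, w) e_uw, false).
- have e_wu : rel_edge (w, u) by rewrite /rel_edge /= r_sym r_uw lt_wu.
  by exists (exist _ (w, u) e_wu, true).
- by move: r_uw; rewrite (enum_rank_inj (ord_inj eq_uw)) r_irr.
Qed.

Lemma perm_rel_graph_nbrs (v : T) :
  perm_eq [seq far_end h | h <- enum [pred h : half | half_end h == v]] (enum (r v)).
Proof.
apply: uniq_perm; rewrite ?enum_uniq // ?map_inj_in_uniq ?enum_uniq //.
  by move=> h h'; rewrite !mem_enum; apply: far_end_inj.
move=> w; rewrite mem_enum; apply/mapP/idP => [[h] | /rel_graph_half[h <- <-]].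
  by rewrite mem_enum inE => /eqP <- ->; apply: rel_graph_adj.
by exists h; rewrite ?mem_enum ?inE.
Qed.

Lemma deg_rel_graph (v : T) : deg (v : gV rel_graph) = #|r v|.
Proof.
by rewrite /deg !cardE -(perm_size (perm_rel_graph_nbrs v)) size_map.
Qed.

Definition nbr_design (lab : T -> T -> cet) (e : gE rel_graph) (b : bool) : cet :=
  if b then lab (val e).2 (val e).1 else lab (val e).1 (val e).2.

Variable lab : T -> T -> cet.

Lemma nbr_designE (h : half) : nbr_design lab h.1 h.2 = lab (half_end h) (far_end h).
Proof. by case: h => e []. Qed.

Lemma assembly_design_nbr :
  (forall u w, r u w -> lab w u = compl (lab u w)) -> assembly_design (nbr_design lab).
Proof. by move=> lab_anti [[p1 p2] e_p]; apply: lab_anti; case/andP: (e_p). Qed.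

Lemma tile_at_nbr_design (v : T) :
  tile_at (nbr_design lab) v = seq_mset [seq lab v w | w <- enum (r v)].
Proof.
rewrite /tile_at; apply/eq_seq_msetP.
have -> : [seq nbr_design lab h.1 h.2 | h <- enum [pred h : half | half_end h == v]] =
          [seq lab v w | w <- [seq far_end h | h <- enum [pred h : half | half_end h == v]]].
  by rewrite -map_comp; apply/eq_in_map => h; rewrite mem_enum inE => /eqP <-; apply: nbr_designE.
exact/perm_map/perm_rel_graph_nbrs.
Qed.

End RelGraph.

Lemma grid_adj_sym (n : nat) : symmetric (@grid_adj n).
Proof. by move=> u v; rewrite /grid_adj (eq_sym v.1) (eq_sym v.2) (orbC (v.2.+1 == _)). Qed.

Lemma grid_adj_irr (n : nat) : irreflexive (@grid_adj n).
Proof. by move=> v; rewrite /grid_adj !eqxx /= orbF orbb; apply/eqP; lia. Qed.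

Definition ladder_nbrs (m : nat) (v : 'I_2 * 'I_m.+1) : seq ('I_2 * 'I_m.+1) :=
  (rev_ord v.1, v.2) :: (if 0 < v.2 then [:: (v.1, inord v.2.-1)] else [::])
     ++ (if v.2 < m then [:: (v.1, inord v.2.+1)] else [::]).

Lemma grid_adj_nbrs (m : nat) (v w : 'I_2 * 'I_m.+1) : grid_adj v w = (w \in ladder_nbrs v).
Proof.
case: v w => [i j] [i' j']; rewrite /grid_adj /ladder_nbrs /=.
have := ltn_ord i; have := ltn_ord i'; have := ltn_ord j; have := ltn_ord j'.
by case: ifP => ?; case: ifP => ? *; rewrite /= !inE !xpair_eqE -!val_eqE /= ?inordK ?orbF;
  try lia; apply/idP/idP; lia.
Qed.

Lemma uniq_ladder_nbrs (m : nat) (v : 'I_2 * 'I_m.+1) : uniq (ladder_nbrs v).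
Proof.
case: v => [i j]; rewrite /ladder_nbrs /=; have := ltn_ord i; have := ltn_ord j.
by case: ifP => ?; case: ifP => ? *; rewrite /= ?inE ?xpair_eqE -?val_eqE /= ?inordK ?andbT; lia.
Qed.

Lemma perm_grid_adj_nbrs (m : nat) (v : 'I_2 * 'I_m.+1) :
  perm_eq (enum (grid_adj v)) (ladder_nbrs v).
Proof.
apply: uniq_perm; rewrite ?enum_uniq ?uniq_ladder_nbrs // => w.
by rewrite mem_enum -grid_adj_nbrs.
Qed.

Lemma deg_ladder (m : nat) (v : 'I_2 * 'I_m.+1) :
  deg (v : gV (ladder m.+1)) = 1 + (0 < v.2) + (v.2 < m).
Proof.
rewrite (deg_rel_graph (@grid_adj_sym _) (@grid_adj_irr _)) cardE.
by rewrite (perm_size (perm_grid_adj_nbrs v)) /ladder_nbrs; case: ifP; case: ifP.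
Qed.

Lemma ladder_pot_size_gt2 (m : nat) (P : {fset tile}) : realizes P (ladder m.+3) -> 2 < #|` P|.
Proof.
move=> realP; pose corner : 'I_2 * 'I_m.+3 := (ord0, ord0).
have [h h_corner h_corner'] : exists2 h : gE (ladder m.+3) * bool,
    half_end h = corner & far_end h = (ord_max, ord0).
  exact: (@rel_graph_half _ (@grid_adj m.+3) (@grid_adj_sym _) (@grid_adj_irr _)
           corner (ord_max, ord0) erefl).
apply: (@realizes_pot_size_gt2 (ladder m.+3) P h (ord0, inord 1) realP).
- by rewrite h_corner deg_ladder.
- by rewrite h_corner' deg_ladder.
- by rewrite deg_ladder /= inordK.
Qed.

(* Symbol 0 runs along row 0 from left to right, along row 1 from right to left,
   and along the two end rungs, oriented so that each corner gets {0, \hat 0};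
   the inner rungs carry 1, unhatted in row 0.  Every tile is then [end_tile],
   [upper_tile] or [lower_tile]. *)
Definition ladder_label (n : nat) (v w : 'I_2 * 'I_n) : cet :=
  if v.1 == w.1 then (0, (v.1 == 1 :> nat) (+) (w.2 < v.2))
  else (if (v.2 == 0 :> nat) || (v.2 == n.-1 :> nat) then 0 else 1,
        if v.2 == 0 :> nat then v.1 == 0 :> nat else v.1 == 1 :> nat).

Lemma ladder_label_anti (n : nat) (v w : 'I_2 * 'I_n) :
  grid_adj v w -> ladder_label w v = compl (ladder_label v w).
Proof.
case: v w => [[[|[|i]] lt_i] [j lt_j]] [[[|[|i']] lt_i'] [j' lt_j']] //;
  rewrite /grid_adj /ladder_label /compl -!val_eqE /= => adj.
- have -> : (j' < j) = ~~ (j < j') by lia.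
  by rewrite negbK.
- have -> : j' = j by lia.
  by case: (j == 0).
- have -> : j' = j by lia.
  by case: (j == 0).
- have -> : (j' < j) = ~~ (j < j') by lia.
  by case: (j < j').
Qed.

Lemma ladder_label_rung (n : nat) (i : 'I_2) (j : 'I_n) :
  ladder_label (i, j) (rev_ord i, j) =
  (if (j == 0 :> nat) || (j == n.-1 :> nat) then 0 else 1,
   if j == 0 :> nat then i == 0 :> nat else i == 1 :> nat).
Proof. by rewrite /ladder_label /= -val_eqE /=; case: i => [[|[|]] ?]. Qed.

Lemma ladder_label_row (n : nat) (i : 'I_2) (j j' : 'I_n) :
  ladder_label (i, j) (i, j') = (0, (i == 1 :> nat) (+) (j' < j)).
Proof. by rewrite /ladder_label /= eqxx. Qed.

Definition end_tile : seq cet := [:: (0, false); (0, true)].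
Definition upper_tile : seq cet := [:: (0, false); (0, true); (1, false)].
Definition lower_tile : seq cet := [:: (0, false); (0, true); (1, true)].

Definition ladder_pot : {fset tile} :=
  [fset seq_mset end_tile; seq_mset upper_tile; seq_mset lower_tile]%fset.

Lemma ladder_label_tile (m : nat) (v : 'I_2 * 'I_m.+3) :
  let s := [seq ladder_label v w | w <- ladder_nbrs v] in
  [|| perm_eq s end_tile, perm_eq s upper_tile | perm_eq s lower_tile].
Proof.
case: v => [i j]; have lt_i := ltn_ord i; have lt_j := ltn_ord j.
rewrite /ladder_nbrs /= ladder_label_rung.
have [j0 | j_gt0] := posnP j.
  rewrite j0 /= ladder_label_row inordK // j0.
  by case: i lt_i => [[|[|]] ?].
have [j_end | j_lt] : j = m.+2 :> nat \/ j < m.+2 by lia.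
  rewrite j_end /= ladder_label_row inordK // j_end eqxx ltnn ltnSn /=.
  by case: i lt_i => [[|[|]] ?].
rewrite j_lt /= !ladder_label_row !inordK; try lia.
have -> : (j == m.+2 :> nat) = false by lia.
have -> : j.-1 < j by lia.
have -> : j.+1 < j = false by lia.
by case: i lt_i => [[|[|]] ?].
Qed.

Lemma mem_ladder_pot (s : seq cet) :
  [|| perm_eq s end_tile, perm_eq s upper_tile | perm_eq s lower_tile] -> seq_mset s \in ladder_pot.
Proof.
case/or3P => /eq_seq_msetP->; apply/fsetUP;
  [left; apply/fsetUP; left | left; apply/fsetUP; right | right]; exact: fset11.
Qed.

Lemma ladder_potP (t : tile) : t \in ladder_pot ->
  [\/ t = seq_mset end_tile, t = seq_mset upper_tile | t = seq_mset lower_tile].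
Proof.
by case/fsetUP => [/fsetUP[] | ] /fset1P; [constructor 1 | constructor 2 | constructor 3].
Qed.

Lemma is_pot_ladder_pot : is_pot ladder_pot.
Proof.
move=> t /ladder_potP t_cases x x_t.
have x_labels : x \in end_tile ++ upper_tile ++ lower_tile.
  by case: t_cases x_t => ->; rewrite mem_seq_mset !mem_cat => ->; rewrite ?orbT.
exists (seq_mset (if x.1 == 0 then end_tile else if x.2 then upper_tile else lower_tile)).
  by apply: mem_ladder_pot; case: (x.1 == 0); case: (x.2).
move: x_labels {x_t}; case: x => k [] /=;
  rewrite mem_seq_mset !inE !xpair_eqE /= ?andbF ?andbT ?orbF.
all: by case: eqP => [->|_] //=; rewrite ?orbF => /eqP->.
Qed.

Lemma pot_size_ladder_pot : pot_size ladder_pot = 3.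
Proof.
have neq (s s' : seq cet) : ~~ perm_eq s s' -> seq_mset s != seq_mset s' :> tile.
  by move=> ss'; apply/eqP => /eq_seq_msetP; apply/negP.
rewrite /pot_size /ladder_pot -fsetUA !cardfsU1 cardfs1 !in_fset1U !in_fset1.
by rewrite (negbTE (neq end_tile upper_tile isT)) (negbTE (neq end_tile lower_tile isT))
  (negbTE (neq upper_tile lower_tile isT)).
Qed.

Lemma realizes_ladder_pot (m : nat) : realizes ladder_pot (ladder m.+3).
Proof.
exists (nbr_design (@ladder_label m.+3)); split.
  exact: assembly_design_nbr (@ladder_label_anti _).
move=> v; have -> : tile_at (nbr_design (@ladder_label m.+3)) v =
                    seq_mset [seq ladder_label v w | w <- ladder_nbrs v].
  rewrite (tile_at_nbr_design (@grid_adj_sym _) (@grid_adj_irr _)).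
  exact/eq_seq_msetP/perm_map/perm_grid_adj_nbrs.
exact/mem_ladder_pot/ladder_label_tile.
Qed.

Theorem proposition7 (n : nat) : 2 < n -> T1_eq (ladder n) 3.
Proof.
move=> n_gt2; have [m ->] : exists m, n = m.+3 by exists (n - 3); lia.
split; last by move=> P _; apply: ladder_pot_size_gt2.
exists ladder_pot; last exact: pot_size_ladder_pot.
by split; [exact: is_pot_ladder_pot | exact: realizes_ladder_pot].
Qed.
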